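(* Let $\mathcal S\subset\mathbb R^n$ be a finite positive spanning set of unit vectors. Then the optimization problem $$\text{(CMP)}\qquad \min_{v\in\mathbb R^n,\ \|v\|=1}\ \max_{d\in\mathcal S} d^\top v$$ is equivalent to the problem $$\text{(QP)}\qquad \max_{x\in\mathbb R^n}\ \|x\|^2\quad\text{subject to}\quad x\in P,\qquad P=\{x\in\mathbb R^n: x^\top d\le 1 \text{ for all } d\in\mathcal S\}.$$
   Context: A finite set $\mathcal S=\{d_1,\dots,d_k\}\subset\mathbb R^n$ is positive spanning if its positive span $\{\lambda_1d_1+\dots+\lambda_kd_k:\lambda_i\ge 0\}$ equals $\mathbb R^n$. $\|\cdot\|$ is the Euclidean norm. The equivalence shown in the paper is via the auxiliary problem (QCLP) $\min_{y\in\mathbb R^n,z\in\mathbb R} z$ subject to $y^\top d\le z$ for all $d\in\mathcal S$ and $\|y\|^2=1$ (which is equivalent to CMP): if $(y^*,z^* )$ is optimal for QCLP then $y^*/z^*$ is optimal for QP, and if $x^*$ is optimal for QP then $(x^*/\|x^*\|,1/\|x^*\|)$ is optimal for QCLP. *)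

From mathcomp Require Import all_boot all_order all_algebra.
From mathcomp Require Import reals.
Set Implicit Arguments. Unset Strict Implicit. Unset Printing Implicit Defensive.
Import Order.TTheory GRing.Theory Num.Theory.
Local Open Scope ring_scope.

Section Defs.
Variables (R : realType) (n : nat).

Definition dotp (u v : 'rV[R]_n) : R := \sum_(i < n) u 0 i * v 0 i.
Definition enorm (u : 'rV[R]_n) : R := Num.sqrt (dotp u u).

Definition positive_spanning (S : seq 'rV[R]_n) : Prop :=
  forall x : 'rV[R]_n, exists lam : 'rV[R]_n -> R,
    (forall d, d \in S -> 0 <= lam d) /\ x = \sum_(d <- S) lam d *: d.

(* CMP objective: max_{d in S} d^T v  (exact maximum whenever S is nonempty) *)
Definition cmp_obj (S : seq 'rV[R]_n) (v : 'rV[R]_n) : R :=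
  \big[Num.max/dotp (head 0 S) v]_(d <- S) dotp d v.

Definition cmp_opt (S : seq 'rV[R]_n) (v : 'rV[R]_n) : Prop :=
  enorm v = 1 /\ forall w, enorm w = 1 -> cmp_obj S v <= cmp_obj S w.

Definition inP (S : seq 'rV[R]_n) (x : 'rV[R]_n) : Prop :=
  forall d, d \in S -> dotp x d <= 1.

Definition qp_opt (S : seq 'rV[R]_n) (x : 'rV[R]_n) : Prop :=
  inP S x /\ forall y, inP S y -> enorm y ^+ 2 <= enorm x ^+ 2.

End Defs.

From mathcomp Require Import all_boot all_order all_algebra.
From mathcomp Require Import reals.
Import Order.TTheory GRing.Theory Num.Theory.
Local Open Scope ring_scope.

(* The CMP objective F v = max_{d in S} d.v is positively homogeneous and,
   because S positively spans, positive at every v <> 0; the polyhedron P is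
   its sublevel set {F <= 1}.  Hence the ray through a nonzero v leaves P at
   v / F v, whose norm is |v| / F v, so maximizing |x| over P amounts to
   maximizing 1 / F over the unit sphere. *)

Section EuclideanNorm.
Context {R : realType} {n : nat}.
Implicit Types (a : R) (u v w : 'rV[R]_n).

Lemma dotpC u v : dotp u v = dotp v u.
Proof. by apply: eq_bigr => i _; rewrite mulrC. Qed.

Lemma dotpZl a u w : dotp (a *: u) w = a * dotp u w.
Proof. by rewrite /dotp mulr_sumr; apply: eq_bigr => i _; rewrite mxE mulrA. Qed.

Lemma dotpZr a u w : dotp w (a *: u) = a * dotp w u.
Proof. by rewrite dotpC dotpZl dotpC. Qed.

Lemma dotp_suml (I : Type) (r : seq I) (a : I -> R) (f : I -> 'rV[R]_n) w :
  dotp (\sum_(k <- r) a k *: f k) w = \sum_(k <- r) a k * dotp (f k) w.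
Proof.
rewrite /dotp; under eq_bigr => i _ do rewrite summxE mulr_suml.
rewrite exchange_big; apply: eq_bigr => k _; rewrite mulr_sumr.
by apply: eq_bigr => i _; rewrite mxE mulrA.
Qed.

Lemma dotp_ge0 u : 0 <= dotp u u.
Proof. by apply: sumr_ge0 => i _; rewrite -expr2 sqr_ge0. Qed.

Lemma dotp_eq0 u : (dotp u u == 0) = (u == 0).
Proof.
apply/eqP/eqP => [uu0|->]; last by rewrite /dotp big1 // => i _; rewrite mxE mul0r.
apply/rowP => i; rewrite mxE; apply/eqP; rewrite -sqrf_eq0 expr2; apply/eqP.
by apply: (psumr_eq0P _ uu0) => // j _; rewrite -expr2 sqr_ge0.
Qed.

Lemma enorm_ge0 u : 0 <= enorm u.
Proof. exact: sqrtr_ge0. Qed.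

Lemma enorm_eq0 u : (enorm u == 0) = (u == 0).
Proof. by rewrite sqrtr_eq0 le_eqVlt ltNge dotp_ge0 orbF dotp_eq0. Qed.

Lemma enorm0 : enorm (0 : 'rV[R]_n) = 0.
Proof. by apply/eqP; rewrite enorm_eq0. Qed.

Lemma enorm_gt0 u : (0 < enorm u) = (u != 0).
Proof. by rewrite lt_neqAle enorm_ge0 andbT eq_sym enorm_eq0. Qed.

Lemma enormZ a u : enorm (a *: u) = `|a| * enorm u.
Proof. by rewrite /enorm dotpZl dotpZr mulrA -expr2 sqrtrM ?sqr_ge0 // sqrtr_sqr. Qed.

Lemma enorm_normalize u : u != 0 -> enorm ((enorm u)^-1 *: u) = 1.
Proof.
rewrite -enorm_gt0 => u_gt0.
by rewrite enormZ ger0_norm ?mulVf ?gt_eqF // invr_ge0 ltW.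
Qed.

Lemma ler_enorm_sqr u v : (enorm u ^+ 2 <= enorm v ^+ 2) = (enorm u <= enorm v).
Proof. by rewrite ler_sqr ?nnegrE ?enorm_ge0. Qed.

End EuclideanNorm.

Section MinimaxProblem.
Variables (R : realType) (n : nat) (S : seq 'rV[R]_n).
Implicit Types (a : R) (v w x y : 'rV[R]_n).

Lemma dotp_le_cmp_obj d v : d \in S -> dotp d v <= cmp_obj S v.
Proof. by move=> dS; exact: (@le_bigmax_seq _ R _ _ _ _ _ _ dS). Qed.

Lemma cmp_objZ a v : 0 <= a -> cmp_obj S (a *: v) = a * cmp_obj S v.
Proof.
move=> a_ge0; rewrite /cmp_obj (big_morph (fun t => a * t)
  (fun s t => @maxr_pMr R a s t a_ge0) (esym (dotpZr a v (head 0 S)))).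
by apply: eq_bigr => d _; rewrite dotpZr.
Qed.

Lemma inP_cmp_obj x : inP S x <-> cmp_obj S x <= 1.
Proof.
split=> [xP | Fx_le1 d dS]; last by rewrite dotpC (le_trans (dotp_le_cmp_obj _ _ dS)).
rewrite /cmp_obj big_seq; apply: (@bigmax_le _ R) => [|d dS]; last by rewrite dotpC xP.
case: S xP => [|d S'] /= xP; last by rewrite dotpC xP ?mem_head.
by rewrite /dotp big1 // => i _; rewrite mxE mul0r.
Qed.

Lemma inP_scale_cmp_obj w : 0 < cmp_obj S w -> inP S ((cmp_obj S w)^-1 *: w).
Proof.
by move=> Fw_gt0; apply/inP_cmp_obj; rewrite cmp_objZ ?mulVf ?gt_eqF // invr_ge0 ltW.
Qed.

Hypothesis hS : positive_spanning S.

Lemma cmp_obj_gt0 v : v != 0 -> 0 < cmp_obj S v.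
Proof.
rewrite ltNge -dotp_eq0; apply: contra => Fv_le0.
have [lam [lam_ge0 v_eq]] := hS v.
have vv_le0 : dotp v v <= 0.
  rewrite {1}v_eq dotp_suml big_seq; apply: sumr_le0 => d dS.
  by rewrite mulr_ge0_le0 ?lam_ge0 // (le_trans (dotp_le_cmp_obj _ _ dS)).
by rewrite eq_le vv_le0 dotp_ge0.
Qed.

Lemma cmp_opt_qp_opt v :
  cmp_opt S v -> 0 < cmp_obj S v /\ qp_opt S ((cmp_obj S v)^-1 *: v).
Proof.
move=> [v1 v_opt]; have v_neq0 : v != 0 by rewrite -enorm_eq0 v1 oner_eq0.
have Fv_gt0 := cmp_obj_gt0 _ v_neq0; split=> //; split; first exact: inP_scale_cmp_obj.
move=> y /inP_cmp_obj Fy_le1.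
rewrite ler_enorm_sqr enormZ v1 mulr1 ger0_norm; last by rewrite invr_ge0 ltW.
rewrite -[_^-1]mul1r ler_pdivlMr //.
have [->|y_neq0] := eqVneq y 0; first by rewrite enorm0 mul0r.
have Fy_eq : cmp_obj S y = enorm y * cmp_obj S ((enorm y)^-1 *: y).
  by rewrite -cmp_objZ ?enorm_ge0 // scalerA mulfV ?scale1r ?enorm_eq0.
apply: le_trans Fy_le1; rewrite Fy_eq ler_wpM2l ?enorm_ge0 //.
by apply: v_opt; rewrite enorm_normalize.
Qed.

Lemma qp_opt_enorm_ge x w :
  qp_opt S x -> w != 0 -> (cmp_obj S w)^-1 * enorm w <= enorm x.
Proof.
move=> [_ x_opt] w_neq0; have Fw_gt0 := cmp_obj_gt0 _ w_neq0.
have := x_opt _ (inP_scale_cmp_obj _ Fw_gt0).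
by rewrite ler_enorm_sqr enormZ ger0_norm // invr_ge0 ltW.
Qed.

Lemma qp_opt_enorm_gt0 x : (0 < n)%N -> qp_opt S x -> 0 < enorm x.
Proof.
move=> n_gt0 x_opt; have one_neq0 : const_mx 1 != 0 :> 'rV[R]_n.
  by apply/eqP => /rowP /(_ (Ordinal n_gt0)); rewrite !mxE; apply/eqP/oner_neq0.
apply: lt_le_trans (qp_opt_enorm_ge _ _ x_opt one_neq0).
by rewrite mulr_gt0 ?invr_gt0 ?cmp_obj_gt0 ?enorm_gt0.
Qed.

Lemma qp_opt_cmp_opt x :
  (0 < n)%N -> qp_opt S x -> 0 < enorm x /\ cmp_opt S ((enorm x)^-1 *: x).
Proof.
move=> n_gt0 x_opt; have x_gt0 := qp_opt_enorm_gt0 _ n_gt0 x_opt.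
split=> //; split=> [|w w1]; first by rewrite enorm_normalize // -enorm_gt0.
have w_neq0 : w != 0 by rewrite -enorm_eq0 w1 oner_eq0.
have := qp_opt_enorm_ge _ _ x_opt w_neq0; rewrite w1 mulr1 => Fw_inv_le.
rewrite cmp_objZ; last by rewrite invr_ge0 ltW.
have Fx_le1 : cmp_obj S x <= 1 by apply/inP_cmp_obj; case: x_opt.
apply: le_trans (_ : (enorm x)^-1 <= _); first by rewrite ler_piMr // invr_ge0 ltW.
have Fw_gt0 := cmp_obj_gt0 _ w_neq0.
by rewrite -[cmp_obj S w]invrK lef_pV2 // posrE invr_gt0.
Qed.

End MinimaxProblem.

Theorem theorem6 (R : realType) (n : nat) (S : seq 'rV[R]_n) (hn : (0 < n)%N)
  (hS : positive_spanning S) (hunit : forall d, d \in S -> enorm d = 1) :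
  (forall v, cmp_opt S v ->
     0 < cmp_obj S v /\ qp_opt S ((cmp_obj S v)^-1 *: v)) /\
  (forall x, qp_opt S x ->
     0 < enorm x /\ cmp_opt S ((enorm x)^-1 *: x)).
Proof.
split=> [v | x]; first exact: cmp_opt_qp_opt.
exact: qp_opt_cmp_opt.
Qed.
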